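(* Let $f$ be an L-additive arithmetic function whose associated completely multiplicative function $h_f$ is nonzero-valued, and let $\Lambda_f$ be its generalized von Mangoldt function. Then for every positive integer $n$, $$(\tau\ast\Lambda_f)(n)=\frac{f(n)\tau(n)}{2h_f(n)}.$$
   Context: An arithmetic function $f:\mathbb{N}\to\mathbb{C}$ is L-additive if there is a completely multiplicative function $h_f$ such that $f(mn)=f(m)h_f(n)+f(n)h_f(m)$ for all positive integers $m,n$; such an $h_f$ is fixed. $\Lambda_f(n)=\frac{f(p)}{h_f(p)}$ if $n=p^k$ for some prime $p$ and integer $k\geq1$, and $0$ otherwise. $\tau(n)$ is the number of positive divisors of $n$, and $\ast$ is Dirichlet convolution. *)

From mathcomp Require Import all_boot all_order all_algebra.
From mathcomp Require Import complex.
From mathcomp Require Import reals.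
Set Implicit Arguments. Unset Strict Implicit. Unset Printing Implicit Defensive.
Import GRing.Theory Num.Theory.
Local Open Scope ring_scope.

(* Arithmetic functions N -> C, represented as nat -> C (value at 0 unused). *)

Definition completely_multiplicative (C : nzRingType) (h : nat -> C) : Prop :=
  h 1%N = 1 /\ forall m n : nat, (0 < m)%N -> (0 < n)%N -> h (m * n)%N = h m * h n.

Definition L_additive_wrt (C : nzRingType) (f h : nat -> C) : Prop :=
  completely_multiplicative h /\
  forall m n : nat, (0 < m)%N -> (0 < n)%N ->
    f (m * n)%N = f m * h n + f n * h m.

Definition Lambda_f (C : fieldType) (f h : nat -> C) (n : nat) : C :=
  (* n = p^k with p prime, k >= 1: then necessarily p = pdiv n, k = logn p n *)
  if (1 < n)%N && (n == pdiv n ^ logn (pdiv n) n)%N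
  then f (pdiv n) / h (pdiv n) else 0.

Definition tau (n : nat) : nat := size (divisors n).

Definition dconv (C : nzRingType) (a b : nat -> C) (n : nat) : C :=
  \sum_(d <- divisors n) a d * b (n %/ d)%N.

From mathcomp Require Import all_boot all_order all_algebra.
From mathcomp Require Import complex.
From mathcomp Require Import reals.
From mathcomp Require Import ring.
Set Implicit Arguments. Unset Strict Implicit. Unset Printing Implicit Defensive.
Import GRing.Theory Num.Theory.
Local Open Scope ring_scope.

(* The quotient g = f / h_f is completely additive, and Lambda_f is to g what
   the von Mangoldt function is to log: the sum of Lambda_f over the divisors
   of n is g(n).  Writing tau = 1 * 1, we get tau * Lambda_f = 1 * g, and
   pairing each divisor d of n with n/d gives 2 (1 * g)(n) = tau(n) g(n). *)

Lemma eq_pfactor p q j k : prime p -> prime q -> (0 < j)%N -> (0 < k)%N ->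
  (p ^ j == q ^ k)%N = (p == q) && (j == k).
Proof.
move=> pp qp; case: j => // j _; case: k => // k _.
apply/eqP/andP => [E | [/eqP-> /eqP->]] //.
have pq : p = q by rewrite -(pdiv_pfactor j pp) E pdiv_pfactor.
by move: E; rewrite pq => /eqP; rewrite eqn_exp2l ?prime_gt1.
Qed.

Section DivisorSums.
Variable V : nmodType.
Implicit Types (F : nat -> V) (n : nat).

Lemma big_divisors_rev n F : (0 < n)%N ->
  \sum_(d <- divisors n) F d = \sum_(d <- divisors n) F (n %/ d)%N.
Proof.
move=> n0; have quotK d : d \in divisors n -> (n %/ (n %/ d))%N = d.
  by rewrite -dvdn_divisors // => dn; rewrite divnA // mulKn.
have quot_divisor d : d \in divisors n -> (n %/ d)%N \in divisors n.
  by rewrite -!dvdn_divisors //; apply: dvdn_div.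
rewrite -(big_map (fun d => n %/ d)%N xpredT); apply/perm_big/uniq_perm.
- exact: divisors_uniq.
- by rewrite (map_inj_in_uniq (can_in_inj quotK)) divisors_uniq.
- move=> d; apply/idP/mapP => [dn | [e en ->]]; last exact: quot_divisor.
  by exists (n %/ d)%N; rewrite ?quotK ?quot_divisor.
Qed.

Lemma big_divisors_dvdn n m F : (0 < n)%N -> (m %| n)%N ->
  \sum_(d <- divisors m) F d = \sum_(d <- divisors n | (d %| m)%N) F d.
Proof.
move=> n0 mn; have m0 := dvdn_gt0 n0 mn.
rewrite -[RHS]big_filter; apply/perm_big/uniq_perm.
- exact: divisors_uniq.
- by rewrite filter_uniq ?divisors_uniq.
- move=> d; rewrite mem_filter -!dvdn_divisors //.
  by apply/idP/andP => [dm | [] //]; rewrite (dvdn_trans dm mn).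
Qed.

Lemma exchange_big_divisors n (G : nat -> nat -> V) : (0 < n)%N ->
  \sum_(d <- divisors n) \sum_(e <- divisors (n %/ d)) G d e =
  \sum_(e <- divisors n) \sum_(d <- divisors (n %/ e)) G d e.
Proof.
move=> n0; have sub_divisors d : d \in divisors n -> forall F : nat -> V,
    \sum_(e <- divisors (n %/ d)) F e = \sum_(e <- divisors n | (e %| n %/ d)%N) F e.
  by rewrite -dvdn_divisors // => dn F; rewrite (big_divisors_dvdn _ n0) ?dvdn_div.
rewrite (eq_big_seq _ (fun d dn => sub_divisors d dn _)).
rewrite (exchange_big_dep xpredT) //=; apply: eq_big_seq => e en.
rewrite sub_divisors // big_seq_cond [RHS]big_seq_cond; apply: eq_bigl => d.
case dn: (d \in divisors n) => //=; move: dn en; rewrite -!dvdn_divisors // => dn en.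
by rewrite !dvdn_divRL // mulnC.
Qed.

Lemma big_pfactor_indicator n q k (x : nat -> nat -> V) :
  (0 < n)%N -> prime q -> (0 < k)%N -> (q ^ k %| n)%N ->
  \sum_(p <- primes n) \sum_(1 <= j < (logn p n).+1)
     (if (q ^ k == p ^ j)%N then x p j else 0) = x q k.
Proof.
move=> n0 qp k0 qkn.
have qn : q \in primes n.
  by rewrite mem_primes qp n0 (dvdn_trans (dvdn_exp k0 (dvdnn q)) qkn).
have kn : k \in index_iota 1 (logn q n).+1.
  by rewrite mem_index_iota k0 ltnS -pfactor_dvdn.
have eqE p j : p \in primes n -> j \in index_iota 1 (logn p n).+1 ->
    (q ^ k == p ^ j)%N = (p == q) && (j == k).
  rewrite mem_primes mem_index_iota => /andP[pp _] /andP[j0 _].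
  by rewrite eq_sym eq_pfactor.
rewrite (bigD1_seq q) ?primes_uniq //= (bigD1_seq k) ?iota_uniq //= eqxx.
rewrite big1_seq ?addr0 => [|j /andP[jk jn]]; last by rewrite eqE ?eqxx // (negbTE jk).
rewrite big1_seq ?addr0 // => p /andP[pq pn]; rewrite big1_seq // => j /andP[_ jn].
by rewrite eqE // (negbTE pq).
Qed.

Lemma big_divisors_pfactor n F : (0 < n)%N ->
  (forall d, F d != 0 -> exists p k, [/\ prime p, (0 < k)%N & d = (p ^ k)%N]) ->
  \sum_(d <- divisors n) F d =
  \sum_(p <- primes n) \sum_(1 <= j < (logn p n).+1) F (p ^ j)%N.
Proof.
move=> n0 suppF.
have indicatorE d : d \in divisors n -> F d = \sum_(p <- primes n)
    \sum_(1 <= j < (logn p n).+1) (if (d == p ^ j)%N then F (p ^ j)%N else 0).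
  case: (eqVneq (F d) 0) => [Fd0 _ | /suppF[q [k [qp k0 ->]]]].
    by rewrite big1 // => p _; rewrite big1 // => j _; case: eqP => // <-.
  by rewrite -dvdn_divisors // => qkn; rewrite big_pfactor_indicator.
rewrite (eq_big_seq _ indicatorE) exchange_big; apply: eq_big_seq => p.
rewrite mem_primes => /and3P[pp _ _]; rewrite exchange_big; apply: eq_big_seq => j.
rewrite mem_index_iota ltnS => /andP[_ jn].
have pjn : (p ^ j)%N \in divisors n by rewrite -dvdn_divisors // pfactor_dvdn.
rewrite (bigD1_seq _ pjn (divisors_uniq n)) eqxx /= big1 ?addr0 // => d.
by move/negbTE->.
Qed.

End DivisorSums.

Lemma dconv_tau (C : nzRingType) (F : nat -> C) n : (0 < n)%N ->
  dconv (fun d => (tau d)%:R) F n =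
  \sum_(e <- divisors n) \sum_(d <- divisors (n %/ e)) F d.
Proof.
move=> n0; rewrite /dconv big_divisors_rev // -exchange_big_divisors //.
apply: eq_big_seq => d; rewrite -dvdn_divisors // => dn.
rewrite divnA // mulKn ?(dvdn_gt0 n0) //.
by rewrite big_const_seq count_predT iter_addr_0 mulr_natl.
Qed.

Definition completely_additive (V : zmodType) (g : nat -> V) : Prop :=
  forall m n : nat, (0 < m)%N -> (0 < n)%N -> g (m * n)%N = g m + g n.

Section CompletelyAdditive.
Variables (V : zmodType) (g : nat -> V).
Hypothesis gM : completely_additive g.

Lemma caddf1 : g 1%N = 0.
Proof. by apply: (@addrI _ (g 1%N)); rewrite addr0 -gM. Qed.

Lemma caddfX p k : (0 < p)%N -> g (p ^ k)%N = g p *+ k.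
Proof.
move=> p0; elim: k => [|k IH]; first by rewrite caddf1.
by rewrite expnS gM ?expn_gt0 ?p0 // IH mulrS.
Qed.

Lemma caddf_prod I (s : seq I) (F : I -> nat) : (forall i, 0 < F i)%N ->
  g (\prod_(i <- s) F i)%N = \sum_(i <- s) g (F i).
Proof.
move=> F0; elim: s => [|i s IH]; first by rewrite !big_nil caddf1.
by rewrite !big_cons gM ?IH // prodn_gt0.
Qed.

Lemma caddf_prime_decomp n : (0 < n)%N ->
  g n = \sum_(p <- primes n) g p *+ logn p n.
Proof.
move=> n0; rewrite {1}(prod_prime_decomp n0) prime_decompE big_map.
rewrite caddf_prod => [|p]; last exact: pfactor_gt0.
apply: eq_big_seq => p; rewrite mem_primes => /and3P[pp _ _].
by rewrite caddfX ?prime_gt0.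
Qed.

Lemma sum_divisors_caddf n : (0 < n)%N ->
  (\sum_(d <- divisors n) g d) *+ 2 = g n *+ tau n.
Proof.
move=> n0; rewrite mulr2n [X in _ + X]big_divisors_rev // -big_split /=.
rewrite (eq_big_seq (fun=> g n)) => [|d].
  by rewrite big_const_seq count_predT iter_addr_0.
rewrite -dvdn_divisors // => dn; have d0 := dvdn_gt0 n0 dn.
by rewrite -gM ?divn_gt0 ?(dvdn_leq n0) // mulnC divnK.
Qed.

End CompletelyAdditive.

Section LAdditive.
Variables (C : fieldType) (f h : nat -> C).
Hypothesis hf : L_additive_wrt f h.
Hypothesis hnz : forall n : nat, (0 < n)%N -> h n != 0.

Lemma L_additive_div : completely_additive (fun n => f n / h n).
Proof.
move=> m n m0 n0; case: hf => [[_ hM] fM]; rewrite fM // hM //.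
by field; rewrite !hnz.
Qed.

Lemma Lambda_f_pfactor p k : prime p -> (0 < k)%N ->
  Lambda_f f h (p ^ k) = f p / h p.
Proof.
move=> pp; case: k => // k _; rewrite /Lambda_f pdiv_pfactor // pfactorK // eqxx.
by rewrite -{1}(exp1n k.+1) ltn_exp2r ?prime_gt1.
Qed.

Lemma Lambda_f_supp d : Lambda_f f h d != 0 ->
  exists p k, [/\ prime p, (0 < k)%N & d = (p ^ k)%N].
Proof.
rewrite /Lambda_f; case: ifP => [/andP[d1 /eqP dE] _ | _]; last by rewrite eqxx.
exists (pdiv d), (logn (pdiv d) d); split => //; first exact: pdiv_prime.
by rewrite lt0n; apply: contraTneq d1 => k0; rewrite dE k0.
Qed.

Lemma sum_divisors_Lambda_f n : (0 < n)%N ->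
  \sum_(d <- divisors n) Lambda_f f h d = f n / h n.
Proof.
move=> n0; rewrite big_divisors_pfactor //; last exact: Lambda_f_supp.
rewrite (caddf_prime_decomp L_additive_div n0); apply: eq_big_seq => p.
rewrite mem_primes => /and3P[pp _ _].
rewrite (eq_big_nat _ _ (F2 := fun=> f p / h p)) => [|j /andP[j0 _]].
  by rewrite sumr_const_nat subn1.
exact: Lambda_f_pfactor.
Qed.

Lemma dconv_tau_Lambda_f n : (0 < n)%N ->
  dconv (fun d => (tau d)%:R) (Lambda_f f h) n *+ 2 = (f n / h n) *+ tau n.
Proof.
move=> n0; rewrite dconv_tau // (eq_big_seq (fun e => f (n %/ e)%N / h (n %/ e)%N)).
  rewrite -(big_divisors_rev (fun e => f e / h e) n0).
  by rewrite (sum_divisors_caddf L_additive_div n0).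
move=> e; rewrite -dvdn_divisors // => en.
by rewrite sum_divisors_Lambda_f // divn_gt0 ?(dvdn_gt0 n0) ?(dvdn_leq n0).
Qed.

End LAdditive.

Local Open Scope complex_scope.

Theorem corollary2p1 (R : realType) (f h : nat -> R[i])
  (hf : L_additive_wrt f h)
  (hnz : forall n : nat, (0 < n)%N -> h n != 0) :
  forall n : nat, (0 < n)%N ->
    dconv (fun d => (tau d)%:R) (Lambda_f f h) n
    = f n * (tau n)%:R / (2 * h n).
Proof.
move=> n n0; have two_neq0 : 2 != 0 :> R[i] by rewrite pnatr_eq0.
apply: (mulfI two_neq0).
rewrite [LHS]mulr_natl (dconv_tau_Lambda_f hf hnz n0) -mulr_natr.
by field; rewrite hnz.
Qed.
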